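(* Let $L^x,L^y>0$, let $i\neq j$ be two boxes, each box $k\in\{i,j\}$ having center $(c^x_k,c^y_k)$, side lengths $(\ell^x_k,\ell^y_k)$ and constants $lb^s_k>0$, $ub^s_k$. Let $$Q^{ub}=\{(c_i,c_j,\ell_i,\ell_j)\in\mathbb{R}^8:\ \tfrac12\ell^s_k\le c^s_k\le L^s-\tfrac12\ell^s_k,\ lb^s_k\le\ell^s_k\le ub^s_k\ \ \forall s\in\{x,y\},k\in\{i,j\}\}.$$ Let $E^8$ be the set of $(c,\ell,z)$ with $(c,\ell)=(c_i,c_j,\ell_i,\ell_j)\in Q^{ub}$, $z=(z^s_{p,q})_{s\in\{x,y\},(p,q)\in\{(i,j),(j,i)\}}\in\{0,1\}^4$ not identically zero, $z^s_{i,j}+z^s_{j,i}\le1$ for each $s$, $z^s_{p,q}=1\Rightarrow\mathscr{B}_p\leftarrow_s\mathscr{B}_q$, and $z^s_{i,j}=z^s_{j,i}=0\Rightarrow(\mathscr{B}_i\not\leftarrow_s\mathscr{B}_j$ and $\mathscr{B}_j\not\leftarrow_s\mathscr{B}_i)$. Let $E^U$ be the set of $(c,\ell,u)$ with $(c,\ell)\in Q^{ub}$, $u=(u^s_{p,q})\in\{0,1\}^4$ having exactly one entry equal to $1$, and $u^s_{p,q}=1\Rightarrow\mathscr{B}_p\leftarrow_s\mathscr{B}_q$. Then for any $\{r,s\}=\{x,y\}$ and $\{p,q\}=\{i,j\}$: (a) $c^s_p+ub^s_q(1-z^s_{q,p})\ge\tfrac12\ell^s_p+\ell^s_q$ holds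 for all points of $E^8$; (b) if $L^s<ub^s_p+ub^s_q$, then $z^r_{p,q}+z^r_{q,p}\ge\dfrac{\ell^s_p+\ell^s_q-L^s}{ub^s_p+ub^s_q-L^s}$ holds for all points of $E^8$, and $u^r_{p,q}+u^r_{q,p}\ge\dfrac{\ell^s_p+\ell^s_q-L^s}{ub^s_p+ub^s_q-L^s}$ holds for all points of $E^U$.
   Context: $\mathscr{B}_p\leftarrow_s\mathscr{B}_q$ means $c^s_p+\tfrac12\ell^s_p\le c^s_q-\tfrac12\ell^s_q$, and $\mathscr{B}_p\not\leftarrow_s\mathscr{B}_q$ means $c^s_p+\tfrac12\ell^s_p\ge c^s_q-\tfrac12\ell^s_q$. $E^8=\operatorname{Em}(Q^{ub},D^8,C^8)$ and $E^U=\operatorname{Em}(Q^{ub},D^4,U^4)$ in the paper's notation. In the paper $ub^s_k=\min\{\sqrt{\alpha_k\beta_k},L^s\}$, $lb^s_k=\beta_k/ub^s_k$. *)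

From Stdlib Require Import Reals Lra.
Open Scope R_scope.

Inductive axis : Type := AX | AY.
Inductive box : Type := Bi | Bj.

(* Configuration data: centers c s k, side lengths l s k.
   Binary vectors z^s_{p,q} (resp. u^s_{p,q}) are functions
   axis -> box -> box -> R; only the entries with p <> q are meaningful. *)

Definition prec (c l : axis -> box -> R) (s : axis) (p q : box) : Prop :=
  c s p + l s p / 2 <= c s q - l s q / 2.

Definition nprec (c l : axis -> box -> R) (s : axis) (p q : box) : Prop :=
  c s p + l s p / 2 >= c s q - l s q / 2.

Definition is01 (x : R) : Prop := x = 0 \/ x = 1.

Definition Qub (L : axis -> R) (lb ub : axis -> box -> R)
  (c l : axis -> box -> R) : Prop :=
  forall s k,
    l s k / 2 <= c s k /\ c s k <= L s - l s k / 2 /\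
    lb s k <= l s k /\ l s k <= ub s k.

Definition E8 (L : axis -> R) (lb ub : axis -> box -> R)
  (c l : axis -> box -> R) (z : axis -> box -> box -> R) : Prop :=
  Qub L lb ub c l /\
  (forall s p q, p <> q -> is01 (z s p q)) /\
  (exists s p q, p <> q /\ z s p q <> 0) /\
  (forall s, z s Bi Bj + z s Bj Bi <= 1) /\
  (forall s p q, p <> q -> z s p q = 1 -> prec c l s p q) /\
  (forall s, z s Bi Bj = 0 -> z s Bj Bi = 0 ->
     nprec c l s Bi Bj /\ nprec c l s Bj Bi).

Definition EU (L : axis -> R) (lb ub : axis -> box -> R)
  (c l : axis -> box -> R) (u : axis -> box -> box -> R) : Prop :=
  Qub L lb ub c l /\
  (forall s p q, p <> q -> is01 (u s p q)) /\
  (exists s0 p0 q0, p0 <> q0 /\ u s0 p0 q0 = 1 /\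
     forall s p q, p <> q -> (s, p, q) <> (s0, p0, q0) -> u s p q = 0) /\
  (forall s p q, p <> q -> u s p q = 1 -> prec c l s p q).

(** Along an axis [s], two boxes that are ordered ([B_p <-_s B_q] or
    [B_q <-_s B_p]) must fit side by side in the strip [[0, L^s]], so
    [l^s_p + l^s_q <= L^s] and the right-hand side of (b) is nonpositive;
    it never exceeds [1] since [l^s_k <= ub^s_k].  Hence (b) only has to be
    checked when both binaries on the other axis [r] vanish, and then the
    nonzero binary that both [E^8] and [E^U] require sits on axis [s] and
    orders the boxes there.  Part (a) is the same packing argument with
    box [q] placed to the left of box [p]. *)

From Stdlib Require Import Reals Lra.
Open Scope R_scope.

Definition separated (c l : axis -> box -> R) (s : axis) (p q : box) : Prop :=
  prec c l s p q \/ prec c l s q p.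

Lemma Rdiv_le_1 (N D : R) : 0 < D -> N <= D -> N / D <= 1.
Proof.
  intros HD HND. rewrite <- (Rdiv_diag D) by lra.
  apply Rmult_le_compat_r; [apply Rlt_le, Rinv_0_lt_compat|]; lra.
Qed.

Lemma Rdiv_nonpos (N D : R) : 0 < D -> N <= 0 -> N / D <= 0.
Proof.
  intros HD HN. assert (0 < / D) by (apply Rinv_0_lt_compat; lra).
  unfold Rdiv. nra.
Qed.

Section Packing.

Variables (L : axis -> R) (lb ub c l : axis -> box -> R).
Hypothesis HQ : Qub L lb ub c l.

Lemma Qub_prec_center (s : axis) (p q : box) :
  prec c l s q p -> c s p >= l s p / 2 + l s q.
Proof.
  unfold prec. destruct (HQ s q) as (Hq & _). lra.
Qed.

Lemma Qub_prec_fit (s : axis) (p q : box) :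
  prec c l s p q -> l s p + l s q <= L s.
Proof.
  unfold prec. destruct (HQ s p) as (Hp & _). destruct (HQ s q) as (_ & Hq & _).
  lra.
Qed.

Lemma Qub_separated_fit (s : axis) (p q : box) :
  separated c l s p q -> l s p + l s q <= L s.
Proof.
  intros [H | H]; [exact (Qub_prec_fit s p q H)|].
  pose proof (Qub_prec_fit s q p H). lra.
Qed.

Lemma Qub_binary_bound (s : axis) (p q : box) (a b : R) :
  L s < ub s p + ub s q -> is01 a -> is01 b ->
  (a = 0 -> b = 0 -> separated c l s p q) ->
  a + b >= (l s p + l s q - L s) / (ub s p + ub s q - L s).
Proof.
  intros HL Ha Hb Hsep.
  destruct (HQ s p) as (_ & _ & _ & Hp). destruct (HQ s q) as (_ & _ & _ & Hq).
  assert (Hle1 : (l s p + l s q - L s) / (ub s p + ub s q - L s) <= 1)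
    by (apply Rdiv_le_1; lra).
  destruct Ha as [-> | ->], Hb as [-> | ->]; try lra.
  pose proof (Qub_separated_fit s p q (Hsep eq_refl eq_refl)).
  assert ((l s p + l s q - L s) / (ub s p + ub s q - L s) <= 0)
    by (apply Rdiv_nonpos; lra).
  lra.
Qed.

End Packing.

Lemma E8_center_bound (L : axis -> R) (lb ub c l : axis -> box -> R)
    (z : axis -> box -> box -> R) (s : axis) (p q : box) :
  q <> p -> E8 L lb ub c l z -> c s p + ub s q * (1 - z s q p) >= l s p / 2 + l s q.
Proof.
  intros Hqp (HQ & H01 & _ & _ & Hprec & _).
  destruct (HQ s p) as (Hp & _). destruct (HQ s q) as (_ & _ & _ & Hq).
  destruct (H01 s q p Hqp) as [-> | E]; [lra|].
  pose proof (Qub_prec_center L lb ub c l HQ s p q (Hprec s q p Hqp E)).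
  rewrite E. lra.
Qed.

Lemma off_axis_entry (w : axis -> box -> box -> R) (r s s' : axis) (p q p' q' : box) :
  r <> s -> p <> q -> p' <> q' -> w r p q = 0 -> w r q p = 0 -> w s' p' q' <> 0 ->
  s' = s /\ (p' = p /\ q' = q \/ p' = q /\ q' = p).
Proof.
  destruct r, s, s', p, q, p', q'; intros; try congruence; intuition congruence.
Qed.

Lemma prec_separated (c l : axis -> box -> R) (s : axis) (p q p' q' : box) :
  p' = p /\ q' = q \/ p' = q /\ q' = p -> prec c l s p' q' -> separated c l s p q.
Proof.
  intros [[-> ->] | [-> ->]] H; [left | right]; exact H.
Qed.

Section Binaries.

Variables (L : axis -> R) (lb ub c l : axis -> box -> R) (w : axis -> box -> box -> R).
Variables (r s : axis) (p q : box).
Hypotheses (Hrs : r <> s) (Hpq : p <> q).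

Lemma E8_other_axis_separated :
  E8 L lb ub c l w -> w r p q = 0 -> w r q p = 0 -> separated c l s p q.
Proof.
  intros (_ & H01 & (s' & p' & q' & Hpq' & Hnz) & _ & Hprec & _) Hz1 Hz2.
  destruct (off_axis_entry w r s s' p q p' q' Hrs Hpq Hpq' Hz1 Hz2 Hnz) as [-> Hpair].
  destruct (H01 s p' q' Hpq') as [E | E]; [contradiction|].
  exact (prec_separated c l s p q p' q' Hpair (Hprec s p' q' Hpq' E)).
Qed.

Lemma EU_other_axis_separated :
  EU L lb ub c l w -> w r p q = 0 -> w r q p = 0 -> separated c l s p q.
Proof.
  intros (_ & _ & (s0 & p0 & q0 & Hpq0 & E & _) & Hprec) Hu1 Hu2.
  assert (Hnz : w s0 p0 q0 <> 0) by lra.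
  destruct (off_axis_entry w r s s0 p q p0 q0 Hrs Hpq Hpq0 Hu1 Hu2 Hnz) as [-> Hpair].
  exact (prec_separated c l s p q p0 q0 Hpair (Hprec s p0 q0 Hpq0 E)).
Qed.

End Binaries.

Theorem proposition6p3 (L : axis -> R) (lb ub : axis -> box -> R) :
  (forall s, 0 < L s) ->
  (forall s k, 0 < lb s k) ->
  forall (r s : axis) (p q : box), r <> s -> p <> q ->
  (forall c l z, E8 L lb ub c l z ->
     c s p + ub s q * (1 - z s q p) >= l s p / 2 + l s q) /\
  (L s < ub s p + ub s q ->
     (forall c l z, E8 L lb ub c l z ->
        z r p q + z r q p >= (l s p + l s q - L s) / (ub s p + ub s q - L s)) /\
     (forall c l u, EU L lb ub c l u ->
        u r p q + u r q p >= (l s p + l s q - L s) / (ub s p + ub s q - L s))).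
Proof.
  intros _ _ r s p q Hrs Hpq.
  split; [|split].
  - intros c l z HE. exact (E8_center_bound L lb ub c l z s p q (not_eq_sym Hpq) HE).
  - intros c l z HE. pose proof HE as (HQ & H01 & _).
    apply (Qub_binary_bound L lb ub c l HQ s p q); auto.
    exact (E8_other_axis_separated L lb ub c l z r s p q Hrs Hpq HE).
  - intros c l u HE. pose proof HE as (HQ & H01 & _).
    apply (Qub_binary_bound L lb ub c l HQ s p q); auto.
    exact (EU_other_axis_separated L lb ub c l u r s p q Hrs Hpq HE).
Qed.
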